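(* Let $\lambda,R_c,H,\alpha_L,\alpha_N,B,C>0$. For $0<\delta<1$ define, with $P_L(r_0)=\frac{1}{1+C\exp(-B(\arctan(H/r_0)-C))}$, $P_N=1-P_L$, $A_s(r_0)=(\delta(H^2+r_0^2)^{\alpha_s/2})^{1/\alpha_N}$, $B_s(r_0)=(\frac1\delta(H^2+r_0^2)^{\alpha_s/2})^{1/\alpha_N}$ ($s\in\{L,N\}$), the area fractions $\bar{C}_{\mathcal{A}_i}=C_{\mathcal{A}_i}/(\pi R_c^2)$, where $C_{\mathcal{A}_1}=2\pi\sum_{s}\int_0^{R_c}P_s(r_0)F_{r_1|r_0}(A_s(r_0))r_0\,dr_0$, $C_{\mathcal{A}_2}=2\pi\sum_{s}\int_0^{R_c}P_s(r_0)(F_{r_1|r_0}(B_s(r_0))-F_{r_1|r_0}(A_s(r_0)))r_0\,dr_0$, $C_{\mathcal{A}_3}=2\pi\sum_{s}\int_0^{R_c}P_s(r_0)(1-F_{r_1|r_0}(B_s(r_0)))r_0\,dr_0$. Then, on $0<\delta<1$, $\bar{C}_{\mathcal{A}_1}$ and $\bar{C}_{\mathcal{A}_3}$ increase with $\delta$, while $\bar{C}_{\mathcal{A}_2}$ decreases with $\delta$.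
   Context: $F_{r_1|r_0}$ is the CDF of the distance $r_1$ from a point $x_0=(r_0,0)$, $0\le r_0\le R_c$, to the nearest point of $\Phi\setminus\{y:\|y\|\le R_c\}$, where $\Phi$ is a homogeneous Poisson point process of intensity $\lambda$ on $\mathbb{R}^2$: $F_{r_1|r_0}(r)=0$ for $r\le R_c-r_0$, $=1-e^{-\lambda\zeta_2(r)}$ for $R_c-r_0<r<R_c+r_0$ where $\zeta_2(r)=\pi r^2-\theta_1R_c^2+R_c^2\sin\theta_1\cos\theta_1-\theta_2r^2+r^2\sin\theta_2\cos\theta_2$, $\theta_1=\arccos\frac{R_c^2+r_0^2-r^2}{2R_cr_0}$, $\theta_2=\arccos\frac{r_0^2+r^2-R_c^2}{2r_0r}$, and $=1-e^{-\lambda(\pi r^2-\pi R_c^2)}$ otherwise. $C_{\mathcal{A}_i}$ is the expected area of the set of users in the malfunction disc served by the nearest ground station only ($i=1$), cooperatively by the UAV and the nearest ground station ($i=2$), or by the UAV only ($i=3$), and $\delta$ is the cooperation parameter. *)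

From Stdlib Require Import Reals Lra.
From Coquelicot Require Import Coquelicot.
Open Scope R_scope.

Definition zeta2 (Rc r0 r : R) : R :=
  let th1 := acos ((Rc^2 + r0^2 - r^2) / (2 * Rc * r0)) in
  let th2 := acos ((r0^2 + r^2 - Rc^2) / (2 * r0 * r)) in
  PI * r^2 - th1 * Rc^2 + Rc^2 * sin th1 * cos th1
           - th2 * r^2 + r^2 * sin th2 * cos th2.

Definition F_r1 (lam Rc r0 r : R) : R :=
  if Rle_dec r (Rc - r0) then 0
  else if Rlt_dec r (Rc + r0) then 1 - exp (- lam * zeta2 Rc r0 r)
  else 1 - exp (- lam * (PI * r^2 - PI * Rc^2)).

Definition P_L (H B C r0 : R) : R :=
  1 / (1 + C * exp (- B * (atan (H / r0) - C))).
Definition P_N (H B C r0 : R) : R := 1 - P_L H B C r0.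

Definition A_s (H alphaN alpha_s delta r0 : R) : R :=
  Rpower (delta * Rpower (H^2 + r0^2) (alpha_s / 2)) (1 / alphaN).
Definition B_s (H alphaN alpha_s delta r0 : R) : R :=
  Rpower (/ delta * Rpower (H^2 + r0^2) (alpha_s / 2)) (1 / alphaN).

Definition C_A1 (lam Rc H alphaL alphaN B C delta : R) : R :=
  2 * PI * (RInt (fun r0 => P_L H B C r0 * F_r1 lam Rc r0 (A_s H alphaN alphaL delta r0) * r0) 0 Rc
          + RInt (fun r0 => P_N H B C r0 * F_r1 lam Rc r0 (A_s H alphaN alphaN delta r0) * r0) 0 Rc).

Definition C_A2 (lam Rc H alphaL alphaN B C delta : R) : R :=
  2 * PI * (RInt (fun r0 => P_L H B C r0 *
                    (F_r1 lam Rc r0 (B_s H alphaN alphaL delta r0)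
                     - F_r1 lam Rc r0 (A_s H alphaN alphaL delta r0)) * r0) 0 Rc
          + RInt (fun r0 => P_N H B C r0 *
                    (F_r1 lam Rc r0 (B_s H alphaN alphaN delta r0)
                     - F_r1 lam Rc r0 (A_s H alphaN alphaN delta r0)) * r0) 0 Rc).

Definition C_A3 (lam Rc H alphaL alphaN B C delta : R) : R :=
  2 * PI * (RInt (fun r0 => P_L H B C r0 *
                    (1 - F_r1 lam Rc r0 (B_s H alphaN alphaL delta r0)) * r0) 0 Rc
          + RInt (fun r0 => P_N H B C r0 *
                    (1 - F_r1 lam Rc r0 (B_s H alphaN alphaN delta r0)) * r0) 0 Rc).

Definition Cbar_A1 lam Rc H alphaL alphaN B C delta :=
  C_A1 lam Rc H alphaL alphaN B C delta / (PI * Rc^2).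
Definition Cbar_A2 lam Rc H alphaL alphaN B C delta :=
  C_A2 lam Rc H alphaL alphaN B C delta / (PI * Rc^2).
Definition Cbar_A3 lam Rc H alphaL alphaN B C delta :=
  C_A3 lam Rc H alphaL alphaN B C delta / (PI * Rc^2).

(* For r0 <= Rc, zeta2 Rc r0 r is the area of the part of the disc of radius r
   about x0 lying outside the disc of radius Rc.  It vanishes for r <= Rc - r0,
   and beyond that its derivative, the length 2 r (PI - theta2) of the arc of
   the circle of radius r outside the disc, is positive.  Hence F_{r1|r0} is
   nondecreasing in r, and strictly increasing past Rc - r0, in particular
   everywhere when r0 = Rc.  As A_s increases and B_s decreases with delta,
   each integrand of C_{A_i} moves monotonically with delta, strictly at
   r0 = Rc; continuity at that endpoint makes the inequality between the
   integrals strict. *)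

From Stdlib Require Import Reals Lra.
From Coquelicot Require Import Coquelicot.
Open Scope R_scope.

Lemma locally_of_Rabs_lt (x d : R) (P : R -> Prop) :
  0 < d -> (forall y, Rabs (y - x) < d -> P y) -> locally x P.
Proof. intros Hd HP. exists (mkposreal d Hd). exact HP. Qed.

Lemma acos_ge_1 x : 1 <= x -> acos x = 0.
Proof. intros H. unfold acos. destruct (Rle_dec x (-1)); [lra|]. destruct (Rle_dec 1 x); lra. Qed.

Lemma acos_le_m1 x : x <= -1 -> acos x = PI.
Proof. intros H. unfold acos. destruct (Rle_dec x (-1)); lra. Qed.

Lemma acos_lt_PI x : -1 < x -> acos x < PI.
Proof.
  intros H. destruct (Rlt_dec x 1).
  - apply acos_bound_lt; lra.
  - rewrite acos_ge_1 by lra. exact PI_RGT_0.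
Qed.

Lemma continuous_acos_1 : continuous acos 1.
Proof.
  apply continuity_pt_filterlim, continuity_pt_locally. intros [eps Heps]. simpl.
  pose proof PI_RGT_0.
  set (e := Rmin (eps / 2) (PI / 2)).
  assert (He : 0 < e) by (apply Rmin_glb_lt; lra).
  assert (He_PI : e <= PI / 2) by apply Rmin_r.
  assert (He_eps : e < eps) by (unfold e; pose proof (Rmin_l (eps / 2) (PI / 2)); lra).
  assert (Hcos : cos e < 1) by (rewrite <- cos_0; apply cos_decreasing_1; lra).
  apply (locally_of_Rabs_lt _ (1 - cos e)); [lra|]. intros y Hy. apply Rabs_def2 in Hy.
  rewrite acos_1, Rminus_0_r.
  destruct (Rle_dec 1 y).
  - rewrite acos_ge_1, Rabs_R0 by lra. lra.
  - assert (0 <= cos e) by (apply cos_ge_0; lra).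
    pose proof (acos_bound y).
    assert (acos y < e).
    { apply cos_decreasing_0; try lra. rewrite cos_acos; lra. }
    rewrite Rabs_right; lra.
Qed.

Lemma continuous_acos x : continuous acos x.
Proof.
  destruct (Rlt_dec x (-1)) as [Hlt|Hge].
  { apply (continuous_ext_loc _ (fun _ => PI)); [|apply continuous_const].
    apply (locally_of_Rabs_lt _ (-1 - x)); [lra|]. intros y Hy. apply Rabs_def2 in Hy.
    rewrite acos_le_m1 by lra. reflexivity. }
  destruct (Rlt_dec 1 x) as [Hgt|Hle].
  { apply (continuous_ext_loc _ (fun _ => 0)); [|apply continuous_const].
    apply (locally_of_Rabs_lt _ (x - 1)); [lra|]. intros y Hy. apply Rabs_def2 in Hy.
    rewrite acos_ge_1 by lra. reflexivity. }
  destruct (Req_dec x 1) as [->|Hne1]; [exact continuous_acos_1|].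
  destruct (Req_dec x (-1)) as [->|Hnem1].
  - apply (continuous_ext (fun y => PI - acos (- y))).
    { intros y. change (PI - acos (- y) = acos y). rewrite acos_opp. ring. }
    apply (continuous_minus (fun _ => PI)); [apply continuous_const|].
    apply (continuous_comp Ropp acos); [exact (continuous_opp (fun y => y) _ (continuous_id _))|].
    replace (- -1) with 1 by ring. exact continuous_acos_1.
  - apply continuity_pt_filterlim, derivable_continuous_pt, derivable_pt_acos. lra.
Qed.

Lemma continuous_acos_comp (f : R -> R) x :
  continuous f x -> continuous (fun y => acos (f y)) x.
Proof. intros Hf. apply (continuous_comp f acos); [exact Hf | apply continuous_acos]. Qed.

Lemma continuous_pow_comp (f : R -> R) n x :
  continuous f x -> continuous (fun y => f y ^ n) x.
Proof.
  intros Hf. apply (continuous_comp f (fun z => z ^ n)); [exact Hf|].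
  apply (@ex_derive_continuous R_AbsRing R_NormedModule). auto_derive. exact I.
Qed.

Lemma continuous_ln_comp (f : R -> R) x :
  continuous f x -> 0 < f x -> continuous (fun y => ln (f y)) x.
Proof. intros Hf Hpos. apply (continuous_comp f ln); [exact Hf | apply continuous_ln, Hpos]. Qed.

Lemma continuous_Rpower_comp (f g : R -> R) x :
  continuous f x -> continuous g x -> 0 < f x -> continuous (fun y => Rpower (f y) (g y)) x.
Proof.
  intros Hf Hg Hpos. apply (continuous_exp_comp (fun y => g y * ln (f y))).
  apply (continuous_mult g (fun y => ln (f y))); [exact Hg|].
  apply continuous_ln_comp; assumption.
Qed.

Ltac solve_continuous := repeat match goal with
  | |- continuous (fun _ => _) _ => first [ apply continuous_const | apply continuous_id | assumption ]
  | |- continuous (fun y => @?f y + @?g y) _ => apply (continuous_plus f g)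
  | |- continuous (fun y => @?f y - @?g y) _ => apply (continuous_minus f g)
  | |- continuous (fun y => @?f y * @?g y) _ => apply (continuous_mult f g)
  | |- continuous (fun y => @?f y / @?g y) _ => apply (continuous_mult f (fun y => / g y))
  | |- continuous (fun y => - @?f y) _ => apply (continuous_opp f)
  | |- continuous (fun y => / @?f y) _ => apply (continuous_Rinv_comp f)
  | |- continuous (fun y => (@?f y) ^ _) _ => apply (continuous_pow_comp f)
  | |- continuous (fun y => sqrt (@?f y)) _ => apply (continuous_sqrt_comp f)
  | |- continuous (fun y => acos (@?f y)) _ => apply (continuous_acos_comp f)
  | |- continuous (fun y => sin (@?f y)) _ => apply (continuous_sin_comp f)
  | |- continuous (fun y => cos (@?f y)) _ => apply (continuous_cos_comp f)
  | |- continuous (fun y => exp (@?f y)) _ => apply (continuous_exp_comp f)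
  | |- continuous (fun y => atan (@?f y)) _ => apply (continuous_atan_comp f)
  | |- continuous (fun y => Rpower (@?f y) (@?g y)) _ => apply (continuous_Rpower_comp f g)
  end.

Definition cos_theta1 (Rc r0 r : R) : R := (Rc^2 + r0^2 - r^2) / (2 * Rc * r0).
Definition cos_theta2 (Rc r0 r : R) : R := (r0^2 + r^2 - Rc^2) / (2 * r0 * r).

Lemma zeta2_unfold Rc r0 r : zeta2 Rc r0 r =
  PI * r^2 - acos (cos_theta1 Rc r0 r) * Rc^2
  + Rc^2 * sin (acos (cos_theta1 Rc r0 r)) * cos (acos (cos_theta1 Rc r0 r))
  - acos (cos_theta2 Rc r0 r) * r^2
  + r^2 * sin (acos (cos_theta2 Rc r0 r)) * cos (acos (cos_theta2 Rc r0 r)).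
Proof. reflexivity. Qed.

(* Stdlib's acos is clamped to [0, PI] outside [-1, 1], so zeta2 itself
   already takes the values of the two outer branches of F_r1. *)
Lemma zeta2_inside Rc r0 r : 0 < Rc -> 0 < r0 -> 0 < r -> r <= Rc - r0 ->
  zeta2 Rc r0 r = 0.
Proof.
  intros HRc Hr0 Hr Hin. rewrite zeta2_unfold, acos_ge_1, acos_le_m1, sin_0, sin_PI; [ring| |].
  - unfold cos_theta2. apply Rle_div_l; nra.
  - unfold cos_theta1. apply Rle_div_r; nra.
Qed.

Lemma zeta2_outside Rc r0 r : 0 < Rc -> 0 < r0 -> Rc + r0 <= r ->
  zeta2 Rc r0 r = PI * (r^2 - Rc^2).
Proof.
  intros HRc Hr0 Hout. rewrite zeta2_unfold, acos_le_m1, acos_ge_1, sin_0, sin_PI; [ring| |].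
  - unfold cos_theta2. apply Rle_div_r; nra.
  - unfold cos_theta1. apply Rle_div_l; nra.
Qed.

Lemma F_r1_exp lam Rc r0 r : 0 < Rc -> 0 < r0 -> 0 < r ->
  F_r1 lam Rc r0 r = 1 - exp (- lam * zeta2 Rc r0 r).
Proof.
  intros HRc Hr0 Hr. unfold F_r1.
  destruct (Rle_dec r (Rc - r0)).
  - rewrite zeta2_inside, Rmult_0_r, exp_0 by lra. ring.
  - destruct (Rlt_dec r (Rc + r0)); [reflexivity|].
    rewrite zeta2_outside by lra. do 3 f_equal. ring.
Qed.

Lemma cos_thetas_bounds Rc r0 r : 0 < r0 <= Rc -> 0 < r -> Rc - r0 <= r <= Rc + r0 ->
  -1 <= cos_theta1 Rc r0 r <= 1 /\ -1 <= cos_theta2 Rc r0 r <= 1.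
Proof.
  intros Hr0 Hr Hmid. unfold cos_theta1, cos_theta2.
  repeat split; [apply Rle_div_r | apply Rle_div_l | apply Rle_div_r | apply Rle_div_l]; nra.
Qed.

Lemma cos_thetas_strict_bounds Rc r0 r : 0 < r0 <= Rc -> 0 < r -> Rc - r0 < r < Rc + r0 ->
  -1 < cos_theta1 Rc r0 r < 1 /\ -1 < cos_theta2 Rc r0 r < 1.
Proof.
  intros Hr0 Hr Hmid. unfold cos_theta1, cos_theta2.
  repeat split; [apply Rlt_div_r | apply Rlt_div_l | apply Rlt_div_r | apply Rlt_div_l]; nra.
Qed.

(* The area of the part of the unit disc beyond a chord at signed distance x
   from its centre. *)
Definition segment_area (x : R) : R := acos x - x * sqrt (1 - x^2).

Lemma is_derive_acos x : -1 < x < 1 -> is_derive acos x (-1 / sqrt (1 - x^2)).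
Proof.
  intros Hx. apply is_derive_Reals, (derive_pt_eq_1 _ _ _ (derivable_pt_acos x Hx)).
  rewrite derive_pt_acos, Rsqr_pow2. reflexivity.
Qed.

Lemma is_derive_segment_area x : -1 < x < 1 ->
  is_derive segment_area x (-2 * sqrt (1 - x^2)).
Proof.
  intros Hx. assert (Hs : 0 < sqrt (1 - x^2)) by (apply sqrt_lt_R0; nra).
  unfold segment_area. auto_derive.
  - repeat split; try nra. exists (-1 / sqrt (1 - x^2)); apply is_derive_acos, Hx.
  - replace (Derive (fun y => acos y) x) with (-1 / sqrt (1 - x^2))
      by (symmetry; apply is_derive_unique, is_derive_acos, Hx).
    replace (1 + - (x * (x * 1))) with (1 - x^2) by ring.
    apply (Rmult_eq_reg_r (sqrt (1 - x^2))); [|lra].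
    field_simplify; [|lra].
    rewrite pow2_sqrt by nra. field.
Qed.

Definition zeta2_segments (Rc r0 r : R) : R :=
  PI * r^2 - Rc^2 * segment_area (cos_theta1 Rc r0 r) - r^2 * segment_area (cos_theta2 Rc r0 r).

Lemma zeta2_eq_segments Rc r0 r : 0 < r0 <= Rc -> 0 < r -> Rc - r0 <= r <= Rc + r0 ->
  zeta2 Rc r0 r = zeta2_segments Rc r0 r.
Proof.
  intros Hr0 Hr Hmid. destruct (cos_thetas_bounds Rc r0 r Hr0 Hr Hmid).
  rewrite zeta2_unfold, !sin_acos, !cos_acos, !Rsqr_pow2 by assumption.
  unfold zeta2_segments, segment_area. ring.
Qed.

Lemma continuous_zeta2_segments Rc r0 r : 0 < r0 <= Rc -> 0 < r -> Rc - r0 <= r <= Rc + r0 ->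
  continuous (zeta2_segments Rc r0) r.
Proof.
  intros Hr0 Hr Hmid. destruct (cos_thetas_bounds Rc r0 r Hr0 Hr Hmid) as [H1 H2].
  unfold zeta2_segments, segment_area, cos_theta1, cos_theta2 in *.
  solve_continuous; nra.
Qed.

(* The derivative is the length of the arc of the circle of radius r about x0
   lying outside the disc of radius Rc. *)
Lemma is_derive_zeta2_segments Rc r0 r : 0 < r0 <= Rc -> 0 < r -> Rc - r0 < r < Rc + r0 ->
  is_derive (zeta2_segments Rc r0) r (2 * r * (PI - acos (cos_theta2 Rc r0 r))).
Proof.
  intros Hr0 Hr Hmid. destruct (cos_thetas_strict_bounds Rc r0 r Hr0 Hr Hmid) as [H1 H2].
  assert (D1 := is_derive_segment_area _ H1). assert (D2 := is_derive_segment_area _ H2).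
  assert (Dc1 : is_derive (cos_theta1 Rc r0) r (- r / (Rc * r0))).
  { unfold cos_theta1. auto_derive; [nra | field; lra]. }
  assert (Dc2 : is_derive (cos_theta2 Rc r0) r ((r^2 - r0^2 + Rc^2) / (2 * r0 * r^2))).
  { unfold cos_theta2. auto_derive; [nra | field; lra]. }
  (* both sides are half the length of the common chord of the two circles *)
  assert (Chord : Rc * sqrt (1 - cos_theta1 Rc r0 r ^ 2) = r * sqrt (1 - cos_theta2 Rc r0 r ^ 2)).
  { assert (Hscale : forall a x, 0 <= a -> a * sqrt x = sqrt (a^2 * x)).
    { intros a x Ha. rewrite sqrt_mult_alt, sqrt_pow2 by nra. reflexivity. }
    rewrite !Hscale by lra. f_equal. unfold cos_theta1, cos_theta2. field. lra. }
  unfold zeta2_segments. auto_derive.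
  - repeat split; eexists; eassumption.
  - replace (Derive (fun x => segment_area x) (cos_theta1 Rc r0 r))
      with (-2 * sqrt (1 - cos_theta1 Rc r0 r ^ 2)) by (symmetry; apply is_derive_unique, D1).
    replace (Derive (fun x => segment_area x) (cos_theta2 Rc r0 r))
      with (-2 * sqrt (1 - cos_theta2 Rc r0 r ^ 2)) by (symmetry; apply is_derive_unique, D2).
    replace (Derive (fun x => cos_theta1 Rc r0 x) r)
      with (- r / (Rc * r0)) by (symmetry; apply is_derive_unique, Dc1).
    replace (Derive (fun x => cos_theta2 Rc r0 x) r)
      with ((r^2 - r0^2 + Rc^2) / (2 * r0 * r^2)) by (symmetry; apply is_derive_unique, Dc2).
    replace (sqrt (1 - cos_theta1 Rc r0 r ^ 2)) with (r * sqrt (1 - cos_theta2 Rc r0 r ^ 2) / Rc)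
      by (rewrite <- Chord; field; lra).
    unfold segment_area, cos_theta2. field. lra.
Qed.

Lemma strict_increasing_of_derive_pos (f df : R -> R) a b :
  (forall x, a < x < b -> is_derive f x (df x)) -> (forall x, a < x < b -> 0 < df x) ->
  (forall x, a <= x <= b -> continuity_pt f x) ->
  forall x y, a <= x -> x < y -> y <= b -> f x < f y.
Proof.
  intros Hd Hpos Hc x y Hax Hxy Hyb.
  assert (pr : forall c, x < c < y -> derivable_pt f c).
  { intros c Hcxy. exists (df c). apply is_derive_Reals, Hd. lra. }
  destruct (MVT f id x y pr (fun c _ => derivable_pt_id c) Hxy) as (c & Hcxy & E).
  { intros c Hcxy. apply Hc. lra. }
  { intros c _. apply derivable_continuous_pt, derivable_pt_id. }
  rewrite derive_pt_id in E. unfold id in E.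
  replace (derive_pt f c (pr c Hcxy)) with (df c) in E.
  - assert (0 < df c) by (apply Hpos; lra). nra.
  - symmetry. apply derive_pt_eq_0, is_derive_Reals, Hd. lra.
Qed.

Lemma zeta2_lt_mid Rc r0 a b : 0 < r0 <= Rc -> 0 < a -> Rc - r0 <= a -> a < b -> b <= Rc + r0 ->
  zeta2 Rc r0 a < zeta2 Rc r0 b.
Proof.
  intros Hr0 Ha Hla Hab Hbu. rewrite !zeta2_eq_segments by lra.
  apply (strict_increasing_of_derive_pos _ (fun r => 2 * r * (PI - acos (cos_theta2 Rc r0 r)))
           a (Rc + r0)); try lra.
  - intros r Hr. apply is_derive_zeta2_segments; lra.
  - intros r Hr. destruct (cos_thetas_strict_bounds Rc r0 r) as [_ H2]; try lra.
    pose proof (acos_lt_PI _ (proj1 H2)). nra.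
  - intros r Hr. apply continuity_pt_filterlim, continuous_zeta2_segments; lra.
Qed.

Lemma zeta2_lt Rc r0 a b : 0 < r0 <= Rc -> 0 < a < b -> Rc - r0 < b ->
  zeta2 Rc r0 a < zeta2 Rc r0 b.
Proof.
  intros Hr0 Hab Hb. pose proof PI_RGT_0.
  assert (Hshift : exists a', 0 < a' < b /\ Rc - r0 <= a' /\ zeta2 Rc r0 a = zeta2 Rc r0 a').
  { destruct (Rle_dec (Rc - r0) a).
    - exists a. repeat split; lra.
    - exists (Rc - r0). rewrite !zeta2_inside by lra. repeat split; lra. }
  destruct Hshift as (a' & Ha' & Hla' & ->).
  destruct (Rle_dec b (Rc + r0)); [apply zeta2_lt_mid; lra|].
  rewrite (zeta2_outside Rc r0 b) by lra.
  destruct (Rle_dec (Rc + r0) a').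
  - rewrite zeta2_outside by lra. apply Rmult_lt_compat_l; nra.
  - apply Rlt_trans with (zeta2 Rc r0 (Rc + r0)); [apply zeta2_lt_mid; lra|].
    rewrite zeta2_outside by lra. apply Rmult_lt_compat_l; nra.
Qed.

Lemma zeta2_le Rc r0 a b : 0 < r0 <= Rc -> 0 < a <= b -> zeta2 Rc r0 a <= zeta2 Rc r0 b.
Proof.
  intros Hr0 Hab. destruct (Req_dec a b) as [->|Hne]; [lra|].
  destruct (Rle_dec b (Rc - r0)).
  - rewrite !zeta2_inside by lra. lra.
  - left. apply zeta2_lt; lra.
Qed.

Lemma exp_le_exp x y : x <= y -> exp x <= exp y.
Proof. intros [Hlt| ->]; [left; apply exp_increasing, Hlt | right; reflexivity]. Qed.

Lemma F_r1_lt lam Rc r0 a b : 0 < lam -> 0 < r0 <= Rc -> 0 < a < b -> Rc - r0 < b ->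
  F_r1 lam Rc r0 a < F_r1 lam Rc r0 b.
Proof.
  intros Hlam Hr0 Hab Hb. rewrite !F_r1_exp by lra.
  assert (zeta2 Rc r0 a < zeta2 Rc r0 b) by (apply zeta2_lt; lra).
  assert (exp (- lam * zeta2 Rc r0 b) < exp (- lam * zeta2 Rc r0 a)) by (apply exp_increasing; nra).
  lra.
Qed.

Lemma F_r1_le lam Rc r0 a b : 0 < lam -> 0 < r0 <= Rc -> 0 < a <= b ->
  F_r1 lam Rc r0 a <= F_r1 lam Rc r0 b.
Proof.
  intros Hlam Hr0 Hab. rewrite !F_r1_exp by lra.
  assert (zeta2 Rc r0 a <= zeta2 Rc r0 b) by (apply zeta2_le; lra).
  assert (exp (- lam * zeta2 Rc r0 b) <= exp (- lam * zeta2 Rc r0 a)) by (apply exp_le_exp; nra).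
  lra.
Qed.

Lemma F_r1_bounds lam Rc r0 r : 0 < lam -> 0 < r0 < Rc -> 0 < r -> 0 <= F_r1 lam Rc r0 r <= 1.
Proof.
  intros Hlam Hr0 Hr. rewrite F_r1_exp by lra.
  assert (0 <= zeta2 Rc r0 r).
  { rewrite <- (zeta2_inside Rc r0 (Rmin r (Rc - r0))) by (try apply Rmin_glb_lt; try apply Rmin_r; lra).
    apply zeta2_le; [lra|]. split; [apply Rmin_glb_lt; lra | apply Rmin_l]. }
  pose proof (exp_pos (- lam * zeta2 Rc r0 r)).
  assert (exp (- lam * zeta2 Rc r0 r) <= 1) by (rewrite <- exp_0; apply exp_le_exp; nra).
  lra.
Qed.

Lemma continuous_F_r1_comp lam Rc (q : R -> R) x : 0 < Rc -> 0 < x ->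
  (forall y, 0 < q y) -> continuous q x -> continuous (fun y => F_r1 lam Rc y (q y)) x.
Proof.
  intros HRc Hx Hq Hcq.
  apply (continuous_ext_loc _ (fun y => 1 - exp (- lam * zeta2 Rc y (q y)))).
  - apply (locally_of_Rabs_lt _ x); [exact Hx|]. intros y Hy. apply Rabs_def2 in Hy.
    rewrite F_r1_exp by (try apply Hq; lra). reflexivity.
  - unfold zeta2, cos_theta1, cos_theta2. cbv zeta. solve_continuous; specialize (Hq x); nra.
Qed.

(* Extending [h x * x] by 0 on [x <= 0] gives a function continuous on [0, b]. *)
Lemma ex_RInt_mul_id (h : R -> R) b M : 0 < b ->
  (forall x, 0 < x <= b -> continuous h x) -> (forall x, 0 < x < b -> Rabs (h x) <= M) ->
  ex_RInt (fun x => h x * x) 0 b.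
Proof.
  intros Hb Hc Hbd.
  set (g := fun x => if Rlt_dec 0 x then h x * x else 0).
  apply (ex_RInt_ext g).
  { intros x Hx. rewrite Rmin_left, Rmax_right in Hx by lra.
    unfold g. destruct (Rlt_dec 0 x); [reflexivity | lra]. }
  apply (@ex_RInt_continuous R_CompleteNormedModule). intros z Hz. rewrite Rmin_left, Rmax_right in Hz by lra.
  destruct (Req_dec z 0) as [->|Hz0].
  - apply continuity_pt_filterlim, continuity_pt_locally. intros [eps Heps]. simpl.
    set (K := Rabs M + 1).
    assert (HK : 0 < K) by (unfold K; pose proof (Rabs_pos M); lra).
    assert (Hd : 0 < Rmin b (eps / K)) by (apply Rmin_glb_lt; [lra | apply Rdiv_lt_0_compat; lra]).
    apply (locally_of_Rabs_lt _ _ _ Hd). intros y Hy.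
    pose proof (Rmin_l b (eps / K)). pose proof (Rmin_r b (eps / K)).
    unfold g. destruct (Rlt_dec 0 0); [lra|]. rewrite Rminus_0_r in Hy |- *.
    destruct (Rlt_dec 0 y) as [Hy0|Hy0]; [|rewrite Rabs_R0; lra].
    rewrite Rabs_right in Hy by lra. rewrite Rabs_mult, (Rabs_right y) by lra.
    assert (Rabs (h y) <= K) by (pose proof (Hbd y ltac:(lra)); pose proof (Rle_abs M); unfold K; lra).
    assert (y * K < eps) by (apply Rlt_div_r; lra).
    nra.
  - apply (continuous_ext_loc _ (fun x => h x * x)).
    + apply (locally_of_Rabs_lt _ z); [lra|]. intros y Hy. apply Rabs_def2 in Hy.
      unfold g. destruct (Rlt_dec 0 y); [reflexivity | lra].
    + apply (continuous_mult h (fun x => x)); [apply Hc; lra | apply continuous_id].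
Qed.

Lemma RInt_gt_0_at_right_end (h : R -> R) a b : a < b -> ex_RInt h a b ->
  (forall x, a < x < b -> 0 <= h x) -> continuous h b -> 0 < h b -> 0 < RInt h a b.
Proof.
  intros Hab Hex Hnn Hc Hpos. apply continuity_pt_filterlim in Hc.
  assert (Hhalf : 0 < h b / 2) by lra.
  destruct (proj1 (continuity_pt_locally h b) Hc (mkposreal _ Hhalf)) as [[d Hd] Hnear].
  simpl in Hnear.
  set (c := b - Rmin (d / 2) ((b - a) / 2)).
  assert (Hc_ab : a < c < b /\ b - c < d).
  { assert (0 < Rmin (d / 2) ((b - a) / 2)) by (apply Rmin_glb_lt; lra).
    pose proof (Rmin_l (d / 2) ((b - a) / 2)). pose proof (Rmin_r (d / 2) ((b - a) / 2)).
    unfold c. lra. }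
  assert (Hex1 : ex_RInt h a c) by (apply (ex_RInt_Chasles_1 h a c b); [lra | exact Hex]).
  assert (Hex2 : ex_RInt h c b) by (apply (ex_RInt_Chasles_2 h a c b); [lra | exact Hex]).
  rewrite <- (RInt_Chasles h a c b Hex1 Hex2).
  assert (0 <= RInt h a c) by (apply RInt_ge_0; [lra | exact Hex1 | intros; apply Hnn; lra]).
  assert ((b - c) * (h b / 2) <= RInt h c b).
  { replace ((b - c) * (h b / 2)) with (RInt (fun _ => h b / 2) c b)
      by (rewrite RInt_const; reflexivity).
    apply RInt_le; [lra | apply ex_RInt_const | exact Hex2 |].
    intros x Hx. assert (Hxb : Rabs (x - b) < d) by (rewrite Rabs_left; lra).
    specialize (Hnear x Hxb). apply Rabs_def2 in Hnear. lra. }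
  assert (0 < (b - c) * (h b / 2)) by (apply Rmult_lt_0_compat; lra).
  change (0 < RInt h a c + RInt h c b). lra.
Qed.

Lemma RInt_weighted_lt (P Phi1 Phi2 : R -> R) b M : 0 < b ->
  (forall x, 0 < x <= b -> continuous P x) ->
  (forall x, 0 < x <= b -> continuous Phi1 x) -> (forall x, 0 < x <= b -> continuous Phi2 x) ->
  (forall x, 0 < x < b -> 0 <= P x <= 1) ->
  (forall x, 0 < x < b -> Rabs (Phi1 x) <= M) -> (forall x, 0 < x < b -> Rabs (Phi2 x) <= M) ->
  (forall x, 0 < x < b -> Phi1 x <= Phi2 x) -> 0 < P b -> Phi1 b < Phi2 b ->
  RInt (fun x => P x * Phi1 x * x) 0 b < RInt (fun x => P x * Phi2 x * x) 0 b.
Proof.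
  intros Hb HcP Hc1 Hc2 HP Hbd1 Hbd2 Hle HPb Hlt.
  assert (Hex : forall (Phi : R -> R) K, (forall x, 0 < x <= b -> continuous Phi x) ->
            (forall x, 0 < x < b -> Rabs (Phi x) <= K) -> ex_RInt (fun x => P x * Phi x * x) 0 b).
  { intros Phi K HcPhi HbdPhi. apply (ex_RInt_mul_id _ b K); [exact Hb| |].
    - intros x Hx. apply (continuous_mult P Phi); [apply HcP | apply HcPhi]; exact Hx.
    - intros x Hx. rewrite Rabs_mult. specialize (HP x Hx). specialize (HbdPhi x Hx).
      rewrite Rabs_right by lra. pose proof (Rabs_pos (Phi x)). nra. }
  apply Rlt_0_minus.
  change (0 < minus (RInt (fun x => P x * Phi2 x * x) 0 b) (RInt (fun x => P x * Phi1 x * x) 0 b)).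
  rewrite <- RInt_minus by (apply (Hex _ M); assumption).
  rewrite (RInt_ext _ (fun x => P x * (Phi2 x - Phi1 x) * x))
    by (intros; unfold minus, plus, opp; simpl; ring).
  apply RInt_gt_0_at_right_end; [exact Hb | | | |].
  - apply (Hex _ (M + M)).
    + intros x Hx. apply (continuous_minus Phi2 Phi1); [apply Hc2 | apply Hc1]; exact Hx.
    + intros x Hx. eapply Rle_trans; [apply Rabs_triang|]. rewrite Rabs_Ropp.
      pose proof (Hbd1 x Hx). pose proof (Hbd2 x Hx). lra.
  - intros x Hx. pose proof (HP x Hx). pose proof (Hle x Hx).
    apply Rmult_le_pos; [apply Rmult_le_pos|]; lra.
  - assert (Hb' : 0 < b <= b) by lra.
    pose proof (HcP b Hb'). pose proof (Hc1 b Hb'). pose proof (Hc2 b Hb').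
    solve_continuous.
  - apply Rmult_lt_0_compat; [apply Rmult_lt_0_compat|]; lra.
Qed.

Lemma Rpower_pos x y : 0 < Rpower x y.
Proof. apply exp_pos. Qed.

Lemma A_s_pos H alphaN alpha d r0 : 0 < A_s H alphaN alpha d r0.
Proof. apply Rpower_pos. Qed.

Lemma B_s_pos H alphaN alpha d r0 : 0 < B_s H alphaN alpha d r0.
Proof. apply Rpower_pos. Qed.

Lemma A_s_lt H alphaN alpha d1 d2 r0 : 0 < alphaN -> 0 < d1 < d2 ->
  A_s H alphaN alpha d1 r0 < A_s H alphaN alpha d2 r0.
Proof.
  intros HaN Hd. unfold A_s. apply Rlt_Rpower_l; [apply Rdiv_lt_0_compat; lra|].
  pose proof (Rpower_pos (H^2 + r0^2) (alpha / 2)). split; nra.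
Qed.

Lemma B_s_lt H alphaN alpha d1 d2 r0 : 0 < alphaN -> 0 < d1 < d2 ->
  B_s H alphaN alpha d2 r0 < B_s H alphaN alpha d1 r0.
Proof.
  intros HaN Hd. unfold B_s. apply Rlt_Rpower_l; [apply Rdiv_lt_0_compat; lra|].
  pose proof (Rpower_pos (H^2 + r0^2) (alpha / 2)).
  assert (/ d2 < / d1) by (apply Rinv_lt_contravar; nra).
  assert (0 < / d2) by (apply Rinv_0_lt_compat; lra). split; nra.
Qed.

Lemma continuous_A_s H alphaN alpha d x : 0 < H -> 0 < d -> continuous (A_s H alphaN alpha d) x.
Proof.
  intros HH Hd. unfold A_s. pose proof (Rpower_pos (H^2 + x^2) (alpha / 2)).
  solve_continuous; nra.
Qed.

Lemma continuous_B_s H alphaN alpha d x : 0 < H -> 0 < d -> continuous (B_s H alphaN alpha d) x.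
Proof.
  intros HH Hd. unfold B_s. pose proof (Rpower_pos (H^2 + x^2) (alpha / 2)).
  pose proof (Rinv_0_lt_compat d Hd). solve_continuous; nra.
Qed.

Lemma P_L_bounds H B C r0 : 0 < C -> 0 < P_L H B C r0 < 1.
Proof.
  intros HC. unfold P_L. pose proof (exp_pos (- B * (atan (H / r0) - C))).
  split; [apply Rdiv_lt_0_compat | apply Rlt_div_l]; nra.
Qed.

Lemma continuous_P_L H B C x : 0 < C -> 0 < x -> continuous (P_L H B C) x.
Proof.
  intros HC Hx. unfold P_L. pose proof (exp_pos (- B * (atan (H / x) - C))).
  solve_continuous; nra.
Qed.

Section LinkType.

Variables (lam Rc H alphaN alpha d1 d2 : R) (P : R -> R).
Hypotheses (Hlam : 0 < lam) (HRc : 0 < Rc) (HH : 0 < H) (HaN : 0 < alphaN) (Hd : 0 < d1 < d2).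
Hypotheses (HcP : forall x, 0 < x -> continuous P x) (HP : forall x, 0 < x -> 0 < P x <= 1).

Local Notation FA d r0 := (F_r1 lam Rc r0 (A_s H alphaN alpha d r0)).
Local Notation FB d r0 := (F_r1 lam Rc r0 (B_s H alphaN alpha d r0)).

Lemma continuous_FA d x : 0 < d -> 0 < x -> continuous (fun r0 => FA d r0) x.
Proof.
  intros Hd0 Hx. apply continuous_F_r1_comp; [exact HRc | exact Hx | apply A_s_pos |].
  apply continuous_A_s; assumption.
Qed.

Lemma continuous_FB d x : 0 < d -> 0 < x -> continuous (fun r0 => FB d r0) x.
Proof.
  intros Hd0 Hx. apply continuous_F_r1_comp; [exact HRc | exact Hx | apply B_s_pos |].
  apply continuous_B_s; assumption.
Qed.

Lemma FA_bounds d x : 0 < x < Rc -> 0 <= FA d x <= 1.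
Proof. intros Hx. apply F_r1_bounds; [exact Hlam | exact Hx | apply A_s_pos]. Qed.

Lemma FB_bounds d x : 0 < x < Rc -> 0 <= FB d x <= 1.
Proof. intros Hx. apply F_r1_bounds; [exact Hlam | exact Hx | apply B_s_pos]. Qed.

Lemma FA_le x : 0 < x <= Rc -> FA d1 x <= FA d2 x.
Proof.
  intros Hx. apply F_r1_le; [exact Hlam | exact Hx |]. split; [apply A_s_pos|].
  left. apply A_s_lt; assumption.
Qed.

Lemma FB_le x : 0 < x <= Rc -> FB d2 x <= FB d1 x.
Proof.
  intros Hx. apply F_r1_le; [exact Hlam | exact Hx |]. split; [apply B_s_pos|].
  left. apply B_s_lt; assumption.
Qed.

(* At r0 = Rc every positive distance lies beyond Rc - r0 = 0. *)
Lemma FA_lt_at_Rc : FA d1 Rc < FA d2 Rc.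
Proof.
  pose proof (A_s_pos H alphaN alpha d2 Rc).
  apply F_r1_lt; [exact Hlam | lra | | lra]. split; [apply A_s_pos | apply A_s_lt; assumption].
Qed.

Lemma FB_lt_at_Rc : FB d2 Rc < FB d1 Rc.
Proof.
  pose proof (B_s_pos H alphaN alpha d1 Rc).
  apply F_r1_lt; [exact Hlam | lra | | lra]. split; [apply B_s_pos | apply B_s_lt; assumption].
Qed.

Lemma RInt_P_weighted_lt (Phi1 Phi2 : R -> R) :
  (forall x, 0 < x -> continuous Phi1 x) -> (forall x, 0 < x -> continuous Phi2 x) ->
  (forall x, 0 < x < Rc -> -1 <= Phi1 x <= 1) -> (forall x, 0 < x < Rc -> -1 <= Phi2 x <= 1) ->
  (forall x, 0 < x < Rc -> Phi1 x <= Phi2 x) -> Phi1 Rc < Phi2 Rc ->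
  RInt (fun r0 => P r0 * Phi1 r0 * r0) 0 Rc < RInt (fun r0 => P r0 * Phi2 r0 * r0) 0 Rc.
Proof.
  intros Hc1 Hc2 Hb1 Hb2 Hle Hlt. apply (RInt_weighted_lt _ _ _ _ 1); try assumption.
  - intros x Hx. apply HcP. lra.
  - intros x Hx. apply Hc1. lra.
  - intros x Hx. apply Hc2. lra.
  - intros x Hx. pose proof (HP x ltac:(lra)). lra.
  - intros x Hx. apply Rabs_le, Hb1, Hx.
  - intros x Hx. apply Rabs_le, Hb2, Hx.
  - apply HP, HRc.
Qed.

Lemma C_A1_integral_lt :
  RInt (fun r0 => P r0 * FA d1 r0 * r0) 0 Rc < RInt (fun r0 => P r0 * FA d2 r0 * r0) 0 Rc.
Proof.
  apply RInt_P_weighted_lt.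
  - intros x Hx. apply continuous_FA; lra.
  - intros x Hx. apply continuous_FA; lra.
  - intros x Hx. pose proof (FA_bounds d1 x Hx). lra.
  - intros x Hx. pose proof (FA_bounds d2 x Hx). lra.
  - intros x Hx. apply FA_le. lra.
  - exact FA_lt_at_Rc.
Qed.

Lemma C_A3_integral_lt :
  RInt (fun r0 => P r0 * (1 - FB d1 r0) * r0) 0 Rc < RInt (fun r0 => P r0 * (1 - FB d2 r0) * r0) 0 Rc.
Proof.
  apply (RInt_P_weighted_lt (fun r0 => 1 - FB d1 r0) (fun r0 => 1 - FB d2 r0)).
  - intros x Hx. apply (continuous_minus (fun _ => 1)); [apply continuous_const | apply continuous_FB; lra].
  - intros x Hx. apply (continuous_minus (fun _ => 1)); [apply continuous_const | apply continuous_FB; lra].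
  - intros x Hx. pose proof (FB_bounds d1 x Hx). lra.
  - intros x Hx. pose proof (FB_bounds d2 x Hx). lra.
  - intros x Hx. pose proof (FB_le x ltac:(lra)). lra.
  - pose proof FB_lt_at_Rc. lra.
Qed.

Lemma C_A2_integral_lt :
  RInt (fun r0 => P r0 * (FB d2 r0 - FA d2 r0) * r0) 0 Rc
  < RInt (fun r0 => P r0 * (FB d1 r0 - FA d1 r0) * r0) 0 Rc.
Proof.
  apply (RInt_P_weighted_lt (fun r0 => FB d2 r0 - FA d2 r0) (fun r0 => FB d1 r0 - FA d1 r0)).
  - intros x Hx. apply (continuous_minus (fun r0 => FB d2 r0)); [apply continuous_FB | apply continuous_FA]; lra.
  - intros x Hx. apply (continuous_minus (fun r0 => FB d1 r0)); [apply continuous_FB | apply continuous_FA]; lra.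
  - intros x Hx. pose proof (FA_bounds d2 x Hx). pose proof (FB_bounds d2 x Hx). lra.
  - intros x Hx. pose proof (FA_bounds d1 x Hx). pose proof (FB_bounds d1 x Hx). lra.
  - intros x Hx. pose proof (FA_le x ltac:(lra)). pose proof (FB_le x ltac:(lra)). lra.
  - pose proof FA_lt_at_Rc. pose proof (FB_le Rc ltac:(lra)). lra.
Qed.

End LinkType.

Lemma area_fraction_lt Rc I1 I2 J1 J2 : 0 < Rc -> I1 < I2 -> J1 < J2 ->
  2 * PI * (I1 + J1) / (PI * Rc^2) < 2 * PI * (I2 + J2) / (PI * Rc^2).
Proof.
  intros HRc HI HJ. pose proof PI_RGT_0.
  apply Rmult_lt_compat_r; [apply Rinv_0_lt_compat, Rmult_lt_0_compat; [lra | apply pow_lt; lra]|].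
  nra.
Qed.

Theorem corollary1 (lam Rc H alphaL alphaN B C : R) :
  0 < lam -> 0 < Rc -> 0 < H -> 0 < alphaL -> 0 < alphaN -> 0 < B -> 0 < C ->
  forall d1 d2 : R, 0 < d1 -> d1 < d2 -> d2 < 1 ->
    Cbar_A1 lam Rc H alphaL alphaN B C d1 < Cbar_A1 lam Rc H alphaL alphaN B C d2 /\
    Cbar_A3 lam Rc H alphaL alphaN B C d1 < Cbar_A3 lam Rc H alphaL alphaN B C d2 /\
    Cbar_A2 lam Rc H alphaL alphaN B C d2 < Cbar_A2 lam Rc H alphaL alphaN B C d1.
Proof.
  intros Hlam HRc HH _ HaN _ HC d1 d2 Hd1 Hd12 _.
  assert (Hd : 0 < d1 < d2) by lra.
  assert (HcPL : forall x, 0 < x -> continuous (P_L H B C) x) by (intros; apply continuous_P_L; assumption).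
  assert (HcPN : forall x, 0 < x -> continuous (P_N H B C) x).
  { intros x Hx. apply (continuous_minus (fun _ => 1)); [apply continuous_const | apply HcPL, Hx]. }
  assert (HPL : forall x, 0 < x -> 0 < P_L H B C x <= 1).
  { intros x _. pose proof (P_L_bounds H B C x HC). lra. }
  assert (HPN : forall x, 0 < x -> 0 < P_N H B C x <= 1).
  { intros x _. unfold P_N. pose proof (P_L_bounds H B C x HC). lra. }
  unfold Cbar_A1, Cbar_A2, Cbar_A3, C_A1, C_A2, C_A3.
  split; [|split]; apply area_fraction_lt; try exact HRc.
  - apply C_A1_integral_lt with (alpha := alphaL) (P := P_L H B C); assumption.
  - apply C_A1_integral_lt with (alpha := alphaN) (P := P_N H B C); assumption.
  - apply C_A3_integral_lt with (alpha := alphaL) (P := P_L H B C); assumption.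
  - apply C_A3_integral_lt with (alpha := alphaN) (P := P_N H B C); assumption.
  - apply C_A2_integral_lt with (alpha := alphaL) (P := P_L H B C); assumption.
  - apply C_A2_integral_lt with (alpha := alphaN) (P := P_N H B C); assumption.
Qed.
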